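(* Let $k$ be a real division algebra, $\mathcal Z\subset k$ a discrete subring closed under conjugation, $(a_n)_{n\ge1}$ a sequence in $\mathcal Z$ and $x_0\in k$ with $x_n=T_{a_n}\cdots T_{a_1}x_0$ defined and $\|x_n\|<1$ for all $n\ge0$. Then the sequence $\|x_n\|$ does not converge to $1$.
   Context: $k\in\{\mathbb{R},\mathbb{C},\mathbb{H},\mathbb{O}\}$, identified with $\mathbb{R}^d$ with Euclidean norm $\|x\|^2=x\overline x$. For $a\in\mathcal Z$, $T_ax=x^{-1}-a$. Discrete means discrete in $\mathbb{R}^d$. *)

From Stdlib Require Import Reals.
Open Scope R_scope.

(* The Cayley-Dickson algebras over R: CD 0 = R, CD 1 = C, CD 2 = H, CD 3 = O.
   CD n is R^(2^n) (nested pairs). *)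
Fixpoint CD (n : nat) : Type :=
  match n with O => R | S m => (CD m * CD m)%type end.

Fixpoint cd_zero (n : nat) : CD n :=
  match n return CD n with O => 0 | S m => (cd_zero m, cd_zero m) end.

Fixpoint cd_one (n : nat) : CD n :=
  match n return CD n with O => 1 | S m => (cd_one m, cd_zero m) end.

Fixpoint cd_add (n : nat) : CD n -> CD n -> CD n :=
  match n return CD n -> CD n -> CD n with
  | O => fun x y => x + y
  | S m => fun x y => (cd_add m (fst x) (fst y), cd_add m (snd x) (snd y))
  end.

Fixpoint cd_opp (n : nat) : CD n -> CD n :=
  match n return CD n -> CD n with
  | O => fun x => - x
  | S m => fun x => (cd_opp m (fst x), cd_opp m (snd x))
  end.

Definition cd_sub (n : nat) (x y : CD n) : CD n := cd_add n x (cd_opp n y).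

Fixpoint cd_scale (n : nat) (r : R) : CD n -> CD n :=
  match n return CD n -> CD n with
  | O => fun x => r * x
  | S m => fun x => (cd_scale m r (fst x), cd_scale m r (snd x))
  end.

Fixpoint cd_conj (n : nat) : CD n -> CD n :=
  match n return CD n -> CD n with
  | O => fun x => x
  | S m => fun x => (cd_conj m (fst x), cd_opp m (snd x))
  end.

Fixpoint cd_mul (n : nat) : CD n -> CD n -> CD n :=
  match n return CD n -> CD n -> CD n with
  | O => fun x y => x * y
  | S m => fun x y =>
      let a := fst x in let b := snd x in let c := fst y in let d := snd y in
      (cd_sub m (cd_mul m a c) (cd_mul m (cd_conj m d) b),
       cd_add m (cd_mul m d a) (cd_mul m b (cd_conj m c)))
  end.

(* squared Euclidean norm in R^(2^n); equals x * conj x *)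
Fixpoint cd_nsq (n : nat) : CD n -> R :=
  match n return CD n -> R with
  | O => fun x => x * x
  | S m => fun x => cd_nsq m (fst x) + cd_nsq m (snd x)
  end.

Definition cd_norm (n : nat) (x : CD n) : R := sqrt (cd_nsq n x).

(* inverse x^{-1} = conj x / ||x||^2 (meaningful for x <> 0) *)
Definition cd_inv (n : nat) (x : CD n) : CD n :=
  cd_scale n (/ cd_nsq n x) (cd_conj n x).

Definition T (n : nat) (a x : CD n) : CD n := cd_sub n (cd_inv n x) a.

Definition is_subring (n : nat) (Z : CD n -> Prop) : Prop :=
  Z (cd_one n) /\
  (forall x y, Z x -> Z y -> Z (cd_sub n x y)) /\
  (forall x y, Z x -> Z y -> Z (cd_mul n x y)).

Definition conj_closed (n : nat) (Z : CD n -> Prop) : Prop :=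
  forall x, Z x -> Z (cd_conj n x).

Definition discrete (n : nat) (Z : CD n -> Prop) : Prop :=
  forall z, Z z -> exists eps, 0 < eps /\
    forall w, Z w -> cd_norm n (cd_sub n w z) < eps -> w = z.

From Stdlib Require Import Reals Lra Lia Classical ClassicalEpsilon.
Open Scope R_scope.

(* Write y_t = conj^t(x_t) and b_t = conj^t(a_t).  Since x^-1 = conj(x)/|x|^2 and
   conjugation is an additive isometric involution preserving Z, the recursion becomes
   y_(t+1) = y_t/|y_t|^2 - b_(t+1) with b_t in Z.  With beta_t = b_1 + ... + b_t in Z,
   the points zeta_t = beta_t + y_t satisfy zeta_(t+1) - beta_t = (zeta_t - beta_t)/|zeta_t - beta_t|^2:
   each step is the inversion in the unit sphere about a point of Z.  Such an inversion
   does not decrease the distance to any point within distance 1 of its centre, and if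
   |x_t| -> 1 the steps |zeta_(t+1) - zeta_t| = (1 - |y_t|^2)/|y_t| tend to 0.
   Let p be a cluster point of (y_t).  Discreteness of Z gives some e > 0 such that no
   point of Z lies at distance in (1, 1 + e) from p.  Hence once zeta_t is at a small
   positive distance c from the translate p + Z, it stays at distance at least c from it:
   near p + l the centre beta_t is within distance 1 of p + l, and far from it the steps
   are too short.  But zeta_t - (p + beta_t) = y_t - p is smaller than c infinitely often.
   Neither the multiplication of k nor d <= 3 plays any role. *)

Declare Scope cd_scope.
Delimit Scope cd_scope with CD.
Notation "0" := (cd_zero _) : cd_scope.
Notation "x + y" := (cd_add _ x y) : cd_scope.
Notation "x - y" := (cd_sub _ x y) : cd_scope.
Notation "- x" := (cd_opp _ x) : cd_scope.
Notation "c *: x" := (cd_scale _ c x) (at level 40, left associativity) : cd_scope.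

Ltac cd_induction :=
  let n := fresh "n" in let IH := fresh "IH" in
  intro n; induction n as [|n IH]; intros;
  [ unfold cd_sub; simpl; first [ring | reflexivity]
  | repeat match goal with p : CD (S _) |- _ => destruct p end;
    unfold cd_sub in *; simpl in *; f_equal; auto ].

Lemma cd_add_0_l : forall n (x : CD n), (0 + x = x)%CD.
Proof. cd_induction. Qed.

Lemma cd_sub_0_r : forall n (x : CD n), (x - 0 = x)%CD.
Proof. cd_induction. Qed.

Lemma cd_sub_diag : forall n (x : CD n), (x - x = 0)%CD.
Proof. cd_induction. Qed.

Lemma cd_sub_add : forall n (x y : CD n), (x - y + y = x)%CD.
Proof. cd_induction. Qed.

Lemma cd_add_as_sub : forall n (x y : CD n), (x + y = x - (0 - y))%CD.
Proof. cd_induction. Qed.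

Lemma cd_add_sub_swap : forall n (x y z : CD n), (x + y - z = x - z + y)%CD.
Proof. cd_induction. Qed.

Lemma cd_add_add_sub : forall n (x y z : CD n), (x + z + (y - z) = x + y)%CD.
Proof. cd_induction. Qed.

Lemma cd_sub_sub : forall n (x y z : CD n), (x - y - z = x - (y + z))%CD.
Proof. cd_induction. Qed.

Lemma cd_sub_add_cancel_l : forall n (x y : CD n), (x - (x + y) = - y)%CD.
Proof. cd_induction. Qed.

Lemma cd_add_sub_add_l : forall n (x y z : CD n), (z + x - (z + y) = x - y)%CD.
Proof. cd_induction. Qed.

Lemma cd_add_sub_add_r : forall n (x y z : CD n), (x + z - (y + z) = x - y)%CD.
Proof. cd_induction. Qed.

Lemma cd_sub_split : forall n (x y z : CD n), (x - z = (x - y) + (y - z))%CD.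
Proof. cd_induction. Qed.

Lemma cd_opp_sub : forall n (x y : CD n), (- (x - y) = y - x)%CD.
Proof. cd_induction. Qed.

Lemma cd_opp_add : forall n (x y : CD n), (- (x + y) = - x + - y)%CD.
Proof. cd_induction. Qed.

Lemma cd_opp_involutive : forall n (x : CD n), (- - x = x)%CD.
Proof. cd_induction. Qed.

Lemma cd_scale_opp : forall n c (x : CD n), (c *: - x = - (c *: x))%CD.
Proof. cd_induction. Qed.

Lemma cd_sub_eq0 n (x y : CD n) : (x - y = 0)%CD -> x = y.
Proof. intro E. rewrite <- (cd_sub_add n x y), E. apply cd_add_0_l. Qed.

Lemma cd_conj_opp : forall n (x : CD n), cd_conj n (- x)%CD = (- cd_conj n x)%CD.
Proof. cd_induction. Qed.

Lemma cd_conj_add : forall n (x y : CD n), cd_conj n (x + y)%CD = (cd_conj n x + cd_conj n y)%CD.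
Proof. cd_induction. apply cd_opp_add. Qed.

Lemma cd_conj_sub : forall n (x y : CD n), cd_conj n (x - y)%CD = (cd_conj n x - cd_conj n y)%CD.
Proof. intros; unfold cd_sub; rewrite cd_conj_add, cd_conj_opp; reflexivity. Qed.

Lemma cd_conj_scale : forall n c (x : CD n), cd_conj n (c *: x)%CD = (c *: cd_conj n x)%CD.
Proof. cd_induction. symmetry; apply cd_scale_opp. Qed.

Lemma cd_conj_involutive : forall n (x : CD n), cd_conj n (cd_conj n x) = x.
Proof. cd_induction. apply cd_opp_involutive. Qed.

Fixpoint cd_dot (n : nat) : CD n -> CD n -> R :=
  match n return CD n -> CD n -> R with
  | O => fun x y => x * y
  | S m => fun x y => cd_dot m (fst x) (fst y) + cd_dot m (snd x) (snd y)
  end.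

Lemma cd_dot_0_l : forall n (y : CD n), cd_dot n 0%CD y = 0.
Proof. intro n; induction n; simpl; intros; [ring | rewrite !IHn; ring]. Qed.

Lemma cd_dot_comm : forall n (x y : CD n), cd_dot n x y = cd_dot n y x.
Proof. intro n; induction n; simpl; intros; [ring | rewrite (IHn (fst x)), (IHn (snd x)); reflexivity]. Qed.

Lemma cd_dot_scale_l : forall n c (x y : CD n), cd_dot n (c *: x)%CD y = c * cd_dot n x y.
Proof. intro n; induction n; simpl; intros; [ring | rewrite !IHn; ring]. Qed.

Lemma cd_dot_scale_r : forall n c (x y : CD n), cd_dot n x (c *: y)%CD = c * cd_dot n x y.
Proof. intro n; induction n; simpl; intros; [ring | rewrite !IHn; ring]. Qed.

Lemma cd_nsq_nonneg : forall n (x : CD n), 0 <= cd_nsq n x.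
Proof. intro n; induction n; simpl; intros; [nra | apply Rplus_le_le_0_compat; auto]. Qed.

Lemma cd_nsq_eq0 : forall n (x : CD n), cd_nsq n x = 0 -> x = 0%CD.
Proof.
  intro n; induction n as [|n IH]; simpl; intros x Hx; [nra|].
  destruct x as [u v]; simpl in *.
  pose proof (cd_nsq_nonneg n u); pose proof (cd_nsq_nonneg n v).
  f_equal; apply IH; lra.
Qed.

Lemma cd_nsq_pos n (x : CD n) : x <> 0%CD -> 0 < cd_nsq n x.
Proof.
  intro x_ne. destruct (cd_nsq_nonneg n x) as [pos|zero]; [exact pos|].
  exfalso. apply x_ne, cd_nsq_eq0. auto.
Qed.

Lemma cd_nsq_zero : forall n, cd_nsq n 0%CD = 0.
Proof. intro n; induction n; simpl; [ring | rewrite IHn; ring]. Qed.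

Lemma cd_nsq_opp : forall n (x : CD n), cd_nsq n (- x)%CD = cd_nsq n x.
Proof. intro n; induction n; simpl; intros; [ring | rewrite !IHn; reflexivity]. Qed.

Lemma cd_nsq_conj : forall n (x : CD n), cd_nsq n (cd_conj n x) = cd_nsq n x.
Proof. intro n; induction n; simpl; intros; [ring | rewrite IHn, cd_nsq_opp; reflexivity]. Qed.

Lemma cd_nsq_add : forall n (x y : CD n),
  cd_nsq n (x + y)%CD = cd_nsq n x + 2 * cd_dot n x y + cd_nsq n y.
Proof. intro n; induction n; simpl; intros; [ring | rewrite !IHn; ring]. Qed.

Lemma cd_nsq_scale : forall n c (x : CD n), cd_nsq n (c *: x)%CD = c * c * cd_nsq n x.
Proof. intro n; induction n; simpl; intros; [ring | rewrite !IHn; ring]. Qed.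

Lemma cd_norm_nonneg n (x : CD n) : 0 <= cd_norm n x.
Proof. apply sqrt_pos. Qed.

Lemma cd_norm_sq n (x : CD n) : cd_norm n x * cd_norm n x = cd_nsq n x.
Proof. apply sqrt_sqrt, cd_nsq_nonneg. Qed.

Lemma cd_norm_lt_sq n (x : CD n) c : 0 <= c -> cd_nsq n x < c * c -> cd_norm n x < c.
Proof. intros. pose proof (cd_norm_sq n x). pose proof (cd_norm_nonneg n x). nra. Qed.

Lemma cd_norm_le_sq n (x : CD n) c : 0 <= c -> cd_nsq n x <= c * c -> cd_norm n x <= c.
Proof. intros. pose proof (cd_norm_sq n x). pose proof (cd_norm_nonneg n x). nra. Qed.

Lemma cd_norm_le n (x y : CD n) : cd_nsq n x <= cd_nsq n y -> cd_norm n x <= cd_norm n y.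
Proof. apply sqrt_le_1_alt. Qed.

Lemma cd_dot_le_norm n (x y : CD n) : cd_dot n x y <= cd_norm n x * cd_norm n y.
Proof.
  pose proof (cd_norm_nonneg n x) as a_ge0; pose proof (cd_norm_nonneg n y) as b_ge0.
  pose proof (cd_norm_sq n x) as a_sq; pose proof (cd_norm_sq n y) as b_sq.
  destruct (Req_dec (cd_nsq n x) 0) as [x0|x0].
  { apply cd_nsq_eq0 in x0; subst x. rewrite cd_dot_0_l. apply Rmult_le_pos; lra. }
  destruct (Req_dec (cd_nsq n y) 0) as [y0|y0].
  { apply cd_nsq_eq0 in y0; subst y. rewrite cd_dot_comm, cd_dot_0_l. apply Rmult_le_pos; lra. }
  pose proof (cd_nsq_nonneg n (cd_norm n y *: x + (- cd_norm n x) *: y)%CD) as sq_nonneg.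
  rewrite cd_nsq_add, !cd_nsq_scale, cd_dot_scale_l, cd_dot_scale_r, <- a_sq, <- b_sq in sq_nonneg.
  revert a_ge0 b_ge0 a_sq b_sq sq_nonneg.
  generalize (cd_norm n x) (cd_norm n y); intros a b a_ge0 b_ge0 a_sq b_sq sq_nonneg.
  assert (a <> 0) by (intros ->; apply x0; rewrite <- a_sq; ring).
  assert (b <> 0) by (intros ->; apply y0; rewrite <- b_sq; ring).
  assert (0 < a * b) by (apply Rmult_lt_0_compat; lra).
  nra.
Qed.

Lemma cd_norm_triangle n (x y : CD n) : cd_norm n (x + y)%CD <= cd_norm n x + cd_norm n y.
Proof.
  pose proof (cd_dot_le_norm n x y).
  pose proof (cd_norm_nonneg n x); pose proof (cd_norm_nonneg n y).
  apply cd_norm_le_sq; [lra|].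
  rewrite cd_nsq_add, <- !cd_norm_sq. lra.
Qed.

Definition cd_dist n (x y : CD n) : R := cd_norm n (x - y)%CD.

Lemma cd_dist_nonneg n (x y : CD n) : 0 <= cd_dist n x y.
Proof. apply cd_norm_nonneg. Qed.

Lemma cd_norm_as_dist n (x : CD n) : cd_norm n x = cd_dist n x 0%CD.
Proof. unfold cd_dist. rewrite cd_sub_0_r. reflexivity. Qed.

Lemma cd_dist_sym n (x y : CD n) : cd_dist n x y = cd_dist n y x.
Proof. unfold cd_dist, cd_norm. rewrite <- cd_opp_sub, cd_nsq_opp. reflexivity. Qed.

Lemma cd_dist_triangle n (x y z : CD n) : cd_dist n x z <= cd_dist n x y + cd_dist n y z.
Proof. unfold cd_dist. rewrite (cd_sub_split n x y z). apply cd_norm_triangle. Qed.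

Lemma cd_dist_add_l n (x y z : CD n) : cd_dist n (z + x)%CD (z + y)%CD = cd_dist n x y.
Proof. unfold cd_dist. rewrite cd_add_sub_add_l. reflexivity. Qed.

Lemma cd_dist_add_r n (x y z : CD n) : cd_dist n (x + z)%CD (y + z)%CD = cd_dist n x y.
Proof. unfold cd_dist. rewrite cd_add_sub_add_r. reflexivity. Qed.

Lemma cd_dist_sub_l n (x y z : CD n) : cd_dist n (x - y)%CD z = cd_dist n x (y + z)%CD.
Proof. unfold cd_dist. rewrite cd_sub_sub. reflexivity. Qed.

(** * Bolzano-Weierstrass in CD n *)

Lemma inv_INR_succ_pos j : 0 < / (INR j + 1).
Proof. apply Rinv_0_lt_compat. pose proof (pos_INR j). lra. Qed.

Lemma inv_INR_succ_le_1 j : / (INR j + 1) <= 1.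
Proof. rewrite <- Rinv_1. apply Rinv_le_contravar; [lra|]. pose proof (pos_INR j). lra. Qed.

Lemma inv_INR_succ_small eta : 0 < eta -> exists J, forall j, (J <= j)%nat -> / (INR j + 1) < eta.
Proof.
  intro eta_pos. destruct (INR_archimed eta 1 eta_pos) as [J HJ].
  exists J; intros j Hj. apply le_INR in Hj. pose proof (pos_INR J).
  apply (Rmult_lt_reg_l (INR j + 1)); [lra|]. rewrite Rinv_r by lra. nra.
Qed.

Definition increasing (phi : nat -> nat) : Prop := forall j, (phi j < phi (S j))%nat.

Lemma increasing_lt phi : increasing phi -> forall i j, (i < j)%nat -> (phi i < phi j)%nat.
Proof. intros phi_incr i j ij. induction ij; [apply phi_incr|]. specialize (phi_incr m). lia. Qed.

Lemma increasing_ge phi : increasing phi -> forall j, (j <= phi j)%nat.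
Proof. intros phi_incr j. induction j; [lia|]. specialize (phi_incr j). lia. Qed.

Lemma increasing_choice (P : nat -> nat -> Prop) :
  (forall j N, exists k, (N <= k)%nat /\ P j k) ->
  exists phi, increasing phi /\ forall j, P j (phi j).
Proof.
  intro P_freq.
  destruct (choice (fun jN k => (snd jN <= k)%nat /\ P (fst jN) k)) as [f Hf].
  { intros [j N]; apply P_freq. }
  set (phi := fix phi j := match j with O => f (O, O) | S i => f (S i, S (phi i)) end).
  exists phi; split.
  - intro j. apply (Hf (S j, S (phi j))).
  - intros [|j]; [apply (Hf (O, O)) | apply (Hf (S j, S (phi j)))].
Qed.

Lemma R_bounded_subseq_cv (u : nat -> R) (M : R) : (forall k, u k * u k <= M) ->
  exists l phi, increasing phi /\
    forall eta, 0 < eta -> exists J, forall j, (J <= j)%nat -> (u (phi j) - l) * (u (phi j) - l) < eta.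
Proof.
  intro u_bd.
  assert (u_in : forall k, - (M + 1) <= u k <= M + 1) by (intro k; specialize (u_bd k); split; nra).
  destruct (Bolzano_Weierstrass u _ (compact_P3 (- (M + 1)) (M + 1)) u_in) as [l l_adh].
  assert (near : forall j N, exists k, (N <= k)%nat /\ Rabs (u k - l) < / (INR j + 1)).
  { intros j N.
    destruct (l_adh (disc l (mkposreal _ (inv_INR_succ_pos j))) N) as [k [Nk uk]].
    - exists (mkposreal _ (inv_INR_succ_pos j)). intros z Hz; exact Hz.
    - exists k; split; assumption. }
  destruct (increasing_choice _ near) as [phi [phi_incr phi_near]].
  exists l, phi; split; [assumption|].
  intros eta eta_pos. destruct (inv_INR_succ_small (Rmin eta 1)) as [J HJ].
  { apply Rmin_glb_lt; lra. }
  exists J; intros j Jj. specialize (HJ j Jj). specialize (phi_near j).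
  pose proof (Rmin_l eta 1); pose proof (Rmin_r eta 1).
  apply Rabs_def2 in phi_near. nra.
Qed.

Lemma cd_bounded_subseq_cv : forall n (u : nat -> CD n) M, (forall k, cd_nsq n (u k) <= M) ->
  exists p phi, increasing phi /\
    forall eta, 0 < eta -> exists J, forall j, (J <= j)%nat -> cd_nsq n (u (phi j) - p)%CD < eta.
Proof.
  intro n; induction n as [|n IH]; intros u M u_bd.
  { destruct (R_bounded_subseq_cv u M u_bd) as [l [phi phi_cv]]. exists l, phi. exact phi_cv. }
  assert (fst_bd : forall k, cd_nsq n (fst (u k)) <= M).
  { intro k. specialize (u_bd k). simpl in u_bd. pose proof (cd_nsq_nonneg n (snd (u k))). lra. }
  assert (snd_bd : forall k, cd_nsq n (snd (u k)) <= M).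
  { intro k. specialize (u_bd k). simpl in u_bd. pose proof (cd_nsq_nonneg n (fst (u k))). lra. }
  destruct (IH (fun k => fst (u k)) M fst_bd) as [p1 [phi1 [phi1_incr cv1]]].
  destruct (IH (fun j => snd (u (phi1 j))) M (fun j => snd_bd (phi1 j))) as [p2 [phi2 [phi2_incr cv2]]].
  exists (p1, p2), (fun j => phi1 (phi2 j)); split.
  { intro j. apply increasing_lt; auto. }
  intros eta eta_pos.
  destruct (cv1 (eta / 2)) as [J1 HJ1]; [lra|].
  destruct (cv2 (eta / 2)) as [J2 HJ2]; [lra|].
  exists (max J1 J2); intros j Jj.
  assert (J1 <= phi2 j)%nat by (pose proof (increasing_ge phi2 phi2_incr j); lia).
  specialize (HJ1 (phi2 j) ltac:(assumption)). specialize (HJ2 j ltac:(lia)).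
  change (cd_nsq n (fst (u (phi1 (phi2 j))) - p1)%CD
          + cd_nsq n (snd (u (phi1 (phi2 j))) - p2)%CD < eta).
  lra.
Qed.

Lemma cd_bounded_cluster n (u : nat -> CD n) M : (forall k, cd_norm n (u k) <= M) ->
  exists p, forall eps, 0 < eps -> forall N, exists t, (N <= t)%nat /\ cd_dist n (u t) p < eps.
Proof.
  intro u_bd.
  assert (nsq_bd : forall k, cd_nsq n (u k) <= M * M).
  { intro k. rewrite <- cd_norm_sq. pose proof (cd_norm_nonneg n (u k)).
    apply Rmult_le_compat; auto. }
  destruct (cd_bounded_subseq_cv n u _ nsq_bd) as [p [phi [phi_incr phi_cv]]].
  exists p; intros eps eps_pos N.
  destruct (phi_cv (eps * eps)) as [J HJ]; [nra|].
  exists (phi (max J N)); split.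
  - pose proof (increasing_ge phi phi_incr (max J N)); lia.
  - apply cd_norm_lt_sq; [lra|]. apply HJ; lia.
Qed.

(** * Discrete additive subgroups *)

Definition add_subgroup n (Z : CD n -> Prop) : Prop :=
  Z (cd_zero n) /\ forall l m, Z l -> Z m -> Z (l - m)%CD.

Lemma subring_add_subgroup n Z : is_subring n Z -> add_subgroup n Z.
Proof.
  intros [Z1 [Zsub _]]. split; [|exact Zsub].
  rewrite <- (cd_sub_diag n (cd_one n)). auto.
Qed.

Lemma add_subgroup_add n Z : add_subgroup n Z -> forall l m, Z l -> Z m -> Z (l + m)%CD.
Proof. intros [Z0 Zsub] l m Zl Zm. rewrite cd_add_as_sub. auto. Qed.

Lemma add_subgroup_separated n Z : add_subgroup n Z -> discrete n Z ->
  exists e0, 0 < e0 /\ forall l m, Z l -> Z m -> cd_dist n l m < e0 -> l = m.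
Proof.
  intros [Z0 Zsub] Zdisc. destruct (Zdisc _ Z0) as [e0 [e0_pos iso0]].
  exists e0; split; [assumption|]. intros l m Zl Zm lm.
  apply cd_sub_eq0, iso0; [auto|]. rewrite cd_sub_0_r. exact lm.
Qed.

Lemma separated_radius_gap n (Z : CD n -> Prop) e0 : 0 < e0 ->
  (forall l m, Z l -> Z m -> cd_dist n l m < e0 -> l = m) ->
  forall p rho, exists eg, 0 < eg /\
    forall mu, Z mu -> cd_dist n mu p < rho + eg -> cd_dist n mu p <= rho.
Proof.
  intros e0_pos Z_sep p rho. apply NNPP; intro no_gap.
  assert (near : forall k, exists mu, Z mu /\ rho < cd_dist n mu p < rho + / (INR k + 1)).
  { intro k. apply NNPP; intro none. apply no_gap. exists (/ (INR k + 1)).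
    split; [apply inv_INR_succ_pos|]. intros mu Zmu close.
    apply Rnot_lt_le; intro far. apply none. exists mu; auto. }
  destruct (choice _ near) as [g g_spec].
  assert (g_bd : forall k, cd_norm n (g k) <= rho + 1 + cd_norm n p).
  { intro k. destruct (g_spec k) as [_ [_ gk_close]]. pose proof (inv_INR_succ_le_1 k).
    rewrite !cd_norm_as_dist. pose proof (cd_dist_triangle n (g k) p 0%CD). lra. }
  destruct (cd_bounded_cluster n g _ g_bd) as [c c_cluster].
  destruct (c_cluster (e0 / 2) ltac:(lra) O) as [k1 [_ k1_near]].
  destruct (g_spec k1) as [Zk1 [k1_far _]].
  destruct (inv_INR_succ_small (cd_dist n (g k1) p - rho)) as [N HN]; [lra|].
  destruct (c_cluster (e0 / 2) ltac:(lra) N) as [k [Nk k_near]].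
  destruct (g_spec k) as [Zk [_ k_close]].
  assert (same : g k = g k1).
  { apply Z_sep; auto. pose proof (cd_dist_triangle n (g k) c (g k1)) as tri.
    rewrite (cd_dist_sym n c) in tri. lra. }
  specialize (HN k Nk). rewrite same in k_close. lra.
Qed.

(** * Orbits of the inversion recursion *)

Section InversionOrbit.

Variable n : nat.
Variable Z : CD n -> Prop.
Hypothesis Z_subgroup : add_subgroup n Z.
Hypothesis Z_discrete : discrete n Z.
Variables y b : nat -> CD n.
Hypothesis b_in_Z : forall t, Z (b (S t)).
Hypothesis y_nsq_bounds : forall t, 0 < cd_nsq n (y t) < 1.
Hypothesis y_succ : forall t, y (S t) = (/ cd_nsq n (y t) *: y t - b (S t))%CD.

Local Notation r t := (cd_nsq n (y t)).

Fixpoint beta t : CD n := match t with O => 0%CD | S s => (beta s + b (S s))%CD end.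

Definition zeta t : CD n := (beta t + y t)%CD.

Lemma beta_in_Z t : Z (beta t).
Proof. induction t; simpl; [apply Z_subgroup | apply add_subgroup_add; auto]. Qed.

Lemma y_norm_lt_1 t : cd_norm n (y t) < 1.
Proof. apply cd_norm_lt_sq; [lra|]. specialize (y_nsq_bounds t). lra. Qed.

Lemma zeta_succ t : zeta (S t) = (beta t + / r t *: y t)%CD.
Proof. unfold zeta; simpl. rewrite y_succ. apply cd_add_add_sub. Qed.

Lemma nsq_beta_sub_zeta t : cd_nsq n (beta t - zeta t)%CD = r t.
Proof. unfold zeta. rewrite cd_sub_add_cancel_l. apply cd_nsq_opp. Qed.

Lemma dist_beta_zeta t : cd_dist n (beta t) (zeta t) = cd_norm n (y t).
Proof. unfold cd_dist, cd_norm. rewrite nsq_beta_sub_zeta. reflexivity. Qed.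

Lemma zeta_dist_lattice t p : cd_dist n (zeta t) (beta t + p)%CD = cd_dist n (y t) p.
Proof. apply cd_dist_add_l. Qed.

Lemma zeta_inversion t q :
  r t * cd_nsq n (zeta (S t) - q)%CD
  = cd_nsq n (zeta t - q)%CD + (1 - cd_nsq n (beta t - q)%CD) * (1 - r t).
Proof.
  rewrite zeta_succ. unfold zeta.
  rewrite !cd_add_sub_swap, !cd_nsq_add, cd_dot_scale_r, cd_nsq_scale.
  specialize (y_nsq_bounds t). field. lra.
Qed.

Lemma zeta_step_nsq t : r t * cd_nsq n (zeta (S t) - zeta t)%CD = (1 - r t) * (1 - r t).
Proof. rewrite zeta_inversion, cd_sub_diag, cd_nsq_zero, nsq_beta_sub_zeta. ring. Qed.

Lemma zeta_step_pos t : 0 < cd_dist n (zeta (S t)) (zeta t).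
Proof.
  pose proof (zeta_step_nsq t) as step. specialize (y_nsq_bounds t).
  unfold cd_dist. rewrite <- (cd_norm_sq n (zeta (S t) - zeta t)%CD) in step.
  destruct (cd_norm_nonneg n (zeta (S t) - zeta t)%CD) as [pos|zero]; [exact pos|].
  rewrite <- zero in step. nra.
Qed.

Lemma zeta_step_small : Un_cv (fun t => cd_norm n (y t)) 1 ->
  forall rho, 0 < rho -> exists T0, forall t, (T0 <= t)%nat -> cd_dist n (zeta (S t)) (zeta t) < rho.
Proof.
  intros y_cv rho rho_pos.
  set (th := Rmin (1 / 2) (rho / 4)).
  assert (th_pos : 0 < th) by (apply Rmin_glb_lt; lra).
  assert (th_le : th <= 1 / 2 /\ th <= rho / 4) by (split; [apply Rmin_l | apply Rmin_r]).
  destruct (y_cv th th_pos) as [T0 HT0]. exists T0; intros t Tt.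
  specialize (HT0 t Tt). unfold R_dist in HT0. cbv beta in HT0. apply Rabs_def2 in HT0.
  pose proof (y_norm_lt_1 t) as s_lt_1. pose proof (cd_norm_sq n (y t)) as r_sq.
  pose proof (zeta_step_nsq t) as step.
  set (s := cd_norm n (y t)) in *.
  assert (r_big : 1 / 4 <= r t).
  { rewrite <- r_sq. replace (1 / 4) with (1 / 2 * (1 / 2)) by field.
    apply Rmult_le_compat; lra. }
  assert (r_close : 0 < 1 - r t < 2 * th).
  { rewrite <- r_sq. replace (1 - s * s) with ((1 - s) * (1 + s)) by ring.
    pose proof (cd_norm_nonneg n (y t)). split; [apply Rmult_lt_0_compat|]; nra. }
  assert (step_bd : cd_nsq n (zeta (S t) - zeta t)%CD * (1 / 4) < 4 * th * th).
  { pose proof (cd_nsq_nonneg n (zeta (S t) - zeta t)%CD). nra. }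
  apply cd_norm_lt_sq; [lra|]. nra.
Qed.

Lemma zeta_dist_nondecr t q : cd_dist n (beta t) q <= 1 ->
  cd_dist n (zeta t) q <= cd_dist n (zeta (S t)) q.
Proof.
  intro close. apply cd_norm_le.
  assert (cd_nsq n (beta t - q)%CD <= 1).
  { rewrite <- cd_norm_sq. pose proof (cd_norm_nonneg n (beta t - q)%CD).
    unfold cd_dist in close. nra. }
  pose proof (zeta_inversion t q). specialize (y_nsq_bounds t).
  pose proof (cd_nsq_nonneg n (zeta (S t) - q)%CD). nra.
Qed.

Lemma lattice_distance_persists p e c T0 t0 :
  (forall mu, Z mu -> cd_dist n mu p < 1 + e -> cd_dist n mu p <= 1) ->
  (forall t, (T0 <= t)%nat -> cd_dist n (zeta (S t)) (zeta t) < e - c) ->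
  (T0 <= t0)%nat ->
  (forall l, Z l -> c <= cd_dist n (zeta t0) (l + p)%CD) ->
  forall t, (t0 <= t)%nat -> forall l, Z l -> c <= cd_dist n (zeta t) (l + p)%CD.
Proof.
  intros gap small_steps T0t0 base t t0t. induction t0t as [|t t0t IH]; [exact base|].
  intros l Zl. specialize (IH l Zl).
  destruct (Rlt_or_le (cd_dist n (zeta t) (l + p)%CD) e) as [near|far].
  - assert (beta_close : cd_dist n (beta t) (l + p)%CD <= 1).
    { rewrite <- cd_dist_sub_l. apply gap; [apply Z_subgroup; auto using beta_in_Z|].
      rewrite cd_dist_sub_l.
      pose proof (cd_dist_triangle n (beta t) (zeta t) (l + p)%CD) as tri.
      rewrite dist_beta_zeta in tri. pose proof (y_norm_lt_1 t). lra. }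
    pose proof (zeta_dist_nondecr t _ beta_close). lra.
  - pose proof (cd_dist_triangle n (zeta t) (zeta (S t)) (l + p)%CD) as tri.
    rewrite (cd_dist_sym n (zeta t) (zeta (S t))) in tri.
    pose proof (small_steps t ltac:(lia)). lra.
Qed.

Lemma lattice_distance_base p e0 e s T0 :
  (forall l m, Z l -> Z m -> cd_dist n l m < e0 -> l = m) -> 0 < e <= e0 ->
  (forall t, (T0 <= t)%nat -> cd_dist n (zeta (S t)) (zeta t) < e / 4) ->
  (T0 <= s)%nat -> cd_dist n (y s) p < e / 4 ->
  exists t0 c, (T0 <= t0)%nat /\ 0 < c <= e / 2 /\
    forall l, Z l -> c <= cd_dist n (zeta t0) (l + p)%CD.
Proof.
  intros Z_sep [e_pos e_le] small_steps T0s near_s.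
  rewrite <- zeta_dist_lattice in near_s.
  assert (t0_spec : exists t0, (T0 <= t0)%nat /\ 0 < cd_dist n (zeta t0) (beta s + p)%CD < e / 2).
  { destruct (Req_dec (cd_dist n (zeta s) (beta s + p)%CD) 0) as [on|off].
    - exists (S s); split; [lia|].
      pose proof (small_steps s T0s); pose proof (zeta_step_pos s).
      pose proof (cd_dist_triangle n (zeta (S s)) (zeta s) (beta s + p)%CD).
      pose proof (cd_dist_triangle n (zeta (S s)) (beta s + p)%CD (zeta s)) as tri.
      rewrite (cd_dist_sym n (beta s + p)%CD (zeta s)) in tri. lra.
    - exists s; split; [assumption|].
      pose proof (cd_dist_nonneg n (zeta s) (beta s + p)%CD). lra. }
  destruct t0_spec as [t0 [T0t0 [d_pos d_lt]]].
  set (c := Rmin (cd_dist n (zeta t0) (beta s + p)%CD) (e / 2)).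
  assert (c_le : c <= cd_dist n (zeta t0) (beta s + p)%CD /\ c <= e / 2)
    by (split; [apply Rmin_l | apply Rmin_r]).
  exists t0, c; split; [assumption|]. split; [split; [apply Rmin_glb_lt|]; lra|].
  intros l Zl. destruct (classic (l = beta s)) as [->|l_ne]; [lra|].
  assert (far : e0 <= cd_dist n (l + p)%CD (beta s + p)%CD).
  { rewrite cd_dist_add_r. apply Rnot_lt_le; intro close.
    apply l_ne, Z_sep; auto using beta_in_Z. }
  pose proof (cd_dist_triangle n (l + p)%CD (zeta t0) (beta s + p)%CD) as tri.
  rewrite (cd_dist_sym n _ (zeta t0)) in tri. lra.
Qed.

Theorem inversion_orbit_norm_not_cv_1 : ~ Un_cv (fun t => cd_norm n (y t)) 1.
Proof.
  intro y_cv.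
  destruct (add_subgroup_separated n Z Z_subgroup Z_discrete) as [e0 [e0_pos Z_sep]].
  destruct (cd_bounded_cluster n y 1) as [p p_cluster].
  { intro t; left; apply y_norm_lt_1. }
  destruct (separated_radius_gap n Z e0 e0_pos Z_sep p 1) as [eg [eg_pos gap]].
  set (e := Rmin e0 eg).
  assert (e_bounds : 0 < e <= e0 /\ e <= eg)
    by (split; [split; [apply Rmin_glb_lt | apply Rmin_l] | apply Rmin_r]; lra).
  destruct (zeta_step_small y_cv (e / 4)) as [T0 small_steps]; [lra|].
  destruct (p_cluster (e / 4) ltac:(lra) T0) as [s [T0s near_s]].
  destruct (lattice_distance_base p e0 e s T0 Z_sep (proj1 e_bounds) small_steps T0s near_s)
    as [t0 [c [T0t0 [c_bounds base]]]].
  destruct (p_cluster c ltac:(lra) t0) as [t [t0t near_t]].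
  assert (far_t := lattice_distance_persists p e c T0 t0
    ltac:(intros mu Zmu close; apply gap; [assumption | lra])
    ltac:(intros t' Tt'; specialize (small_steps t' Tt'); lra)
    T0t0 base t t0t (beta t) (beta_in_Z t)).
  rewrite zeta_dist_lattice in far_t. lra.
Qed.

End InversionOrbit.

Lemma iter_conj_sub n k (x y : CD n) :
  Nat.iter k (cd_conj n) (x - y)%CD = (Nat.iter k (cd_conj n) x - Nat.iter k (cd_conj n) y)%CD.
Proof. induction k as [|k IH]; simpl; [reflexivity|]. rewrite IH. apply cd_conj_sub. Qed.

Lemma iter_conj_scale n k c (x : CD n) :
  Nat.iter k (cd_conj n) (c *: x)%CD = (c *: Nat.iter k (cd_conj n) x)%CD.
Proof. induction k as [|k IH]; simpl; [reflexivity|]. rewrite IH. apply cd_conj_scale. Qed.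

Lemma iter_conj_nsq n k (x : CD n) : cd_nsq n (Nat.iter k (cd_conj n) x) = cd_nsq n x.
Proof. induction k as [|k IH]; simpl; [reflexivity|]. rewrite cd_nsq_conj. exact IH. Qed.

Lemma iter_conj_closed n (Z : CD n -> Prop) : conj_closed n Z ->
  forall k x, Z x -> Z (Nat.iter k (cd_conj n) x).
Proof. intros Zc k x Zx. induction k as [|k IH]; simpl; auto. Qed.

Theorem lemma1p6 (d : nat) (Hd : (d <= 3)%nat) (Z : CD d -> Prop)
  (HZ : is_subring d Z) (HZc : conj_closed d Z) (HZd : discrete d Z)
  (a : nat -> CD d) (Ha : forall n, Z (a (S n)))
  (x : nat -> CD d)
  (Hdef : forall n, x n <> cd_zero d)
  (Hrec : forall n, x (S n) = T d (a (S n)) (x n))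
  (Hlt : forall n, cd_norm d (x n) < 1) :
  ~ Un_cv (fun n => cd_norm d (x n)) 1.
Proof.
  set (y t := Nat.iter t (cd_conj d) (x t)).
  assert (nsq_y : forall t, cd_nsq d (y t) = cd_nsq d (x t)) by (intro; apply iter_conj_nsq).
  intro x_cv.
  apply (inversion_orbit_norm_not_cv_1 d Z (subring_add_subgroup d Z HZ) HZd
           y (fun t => Nat.iter t (cd_conj d) (a t))).
  - intro t. apply iter_conj_closed; [exact HZc | apply Ha].
  - intro t. rewrite nsq_y. split.
    + apply cd_nsq_pos, Hdef.
    + rewrite <- cd_norm_sq. pose proof (Hlt t). pose proof (cd_norm_nonneg d (x t)). nra.
  - intro t. rewrite nsq_y. unfold y. rewrite Hrec. unfold T, cd_inv.
    rewrite iter_conj_sub, iter_conj_scale, (Nat.iter_succ_r t _ (cd_conj d) (cd_conj d (x t))).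
    rewrite cd_conj_involutive. reflexivity.
  - intros eps eps_pos. destruct (x_cv eps eps_pos) as [N HN].
    exists N; intros t Nt. cbv beta. unfold cd_norm. rewrite nsq_y. exact (HN t Nt).
Qed.
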